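(* Let $K$ be a field of characteristic different from $2$, let $c\in K$, let $f=x^2+c\in K[x]$, and let $\alpha\in K$. Assume that the backward orbit $f^{-\infty}(\alpha)=\bigcup_{n\ge 1}(f^n)^{-1}(\alpha)\subseteq\overline{K}$ does not contain $0$ (the unique critical point of $f$ in $\overline{K}$). Define $c_1=-c$ and $c_n=f(c_{n-1})$ for $n\ge 2$, and set $c_{1,\alpha}=c_1+\alpha$ and $c_{n,\alpha}=c_n-\alpha$ for $n\ge 2$. If the Galois group $G_\infty(f,\alpha)$ is abelian and $f-\alpha$ is irreducible over $K$, then the $\mathbb{F}_2$-subspace of $K^{\times}/(K^{\times})^2$ spanned by the classes of the elements $c_{n,\alpha}$, $n\ge 1$, has dimension $1$.
   Context: For $n\ge1$, $f^n$ denotes the $n$-th iterate of $f$, $K_n(f,\alpha)$ the splitting field of $f^n-\alpha$ over $K$, and $K_\infty(f,\alpha)=\bigcup_n K_n(f,\alpha)$. The dynamical Galois group $G_\infty(f,\alpha)$ is the Galois group of $K_\infty(f,\alpha)/K$ (equivalently the inverse limit of the Galois groups of $K_n(f,\alpha)/K$). The hypothesis on the backward orbit ensures $c_{n,\alpha}\neq 0$, so these define classes in $K^\times/(K^\times)^2$, which is viewed as an $\mathbb{F}_2$-vector space. *)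

From HB Require Import structures.
From mathcomp Require Import all_boot all_order all_algebra all_fingroup all_field.
Set Implicit Arguments. Unset Strict Implicit. Unset Printing Implicit Defensive.
Import GRing.Theory.
Local Open Scope ring_scope.

Section Dyn.
Variable K : fieldType.

Definition fpoly (c : K) : {poly K} := 'X^2 + c%:P.
Definition fiter (c : K) (n : nat) : {poly K} := iter n (fun p => fpoly c \Po p) 'X.

(* critical orbit: crit c n = c_n for n >= 1, with c_1 = -c, c_n = f(c_{n-1}) *)
Definition crit (c : K) (n : nat) : K := iter n.-1 (fun x => x ^+ 2 + c) (- c).
Definition calpha (c alpha : K) (n : nat) : K :=
  if n == 1%N then crit c 1 + alpha else crit c n - alpha.

(* Square classes in K^x / (K^x)^2, viewed as an F_2-vector space (written
   multiplicatively).  The class of a nonzero x is trivial iff x is a square. *)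
Definition is_square (x : K) : Prop := exists y : K, x = y ^+ 2.

(* x (nonzero) lies in the F_2-span of the classes of the family v : nat -> K^x:
   its class is the class of a finite product of the v i. *)
Definition in_sq_span (v : nat -> K) (x : K) : Prop :=
  x != 0 /\ exists (s : seq nat) (t : K), t != 0 /\ x = t ^+ 2 * \prod_(i <- s) v i.

Definition in_sq_span_fin (d : nat) (b : 'I_d -> K) (x : K) : Prop :=
  x != 0 /\ exists (S : {set 'I_d}) (t : K), t != 0 /\ x = t ^+ 2 * \prod_(i in S) b i.

Definition sq_independent (d : nat) (b : 'I_d -> K) : Prop :=
  (forall i, b i != 0) /\
  forall S : {set 'I_d}, S != set0 -> ~ is_square (\prod_(i in S) b i).

Definition sq_span_dim (v : nat -> K) (d : nat) : Prop :=
  exists b : 'I_d -> K,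
    [/\ forall i, in_sq_span v (b i),
        sq_independent b &
        forall n, in_sq_span_fin b (v n)].

End Dyn.

From HB Require Import structures.
From mathcomp Require Import all_boot all_order all_algebra all_fingroup all_field.
From mathcomp Require Import ring.

(* Let w be the image under f^(k+1) of a root of f^(k+2) - alpha, so that
   w^2 = alpha - c, which is not a square in K.  The polynomial
   H = f^k(X + c) - w satisfies H(X^2) = f^(k+1) - w, a factor of
   f^(k+2) - alpha; as H(X^2) splits, its roots come in pairs +-r and the
   constant term H(0) = f^k(c) - w is, up to sign, a square z^2.  If s is an
   automorphism with s w = -w, then N = z s(z) satisfies
   N^2 = f^k(c)^2 - w^2 = c_(k+2,alpha).  When the Galois group is abelian, N
   is fixed by the stabiliser of w, and s N = +-N; hence N or N w is fixed by
   the whole group, i.e. c_(k+2,alpha) lies in the square class of 1 or of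
   alpha - c = c_(1,alpha). *)

Set Implicit Arguments.
Unset Strict Implicit.
Unset Printing Implicit Defensive.
Import GRing.Theory.
Local Open Scope ring_scope.

Section Iterates.
Variable F : fieldType.
Implicit Types (c : F) (p : {poly F}).

Lemma fpoly_comp c p : fpoly c \Po p = p ^+ 2 + c%:P.
Proof. by rewrite /fpoly comp_polyD comp_Xn_poly comp_polyC. Qed.

Lemma fiterS c m : fiter c m.+1 = fpoly c \Po fiter c m.
Proof. by []. Qed.

Lemma fiterSr c m : fiter c m.+1 = fiter c m \Po fpoly c.
Proof.
elim: m => [|m IH]; first by rewrite fiterS /fiter /= comp_polyXr comp_polyX.
by rewrite [LHS]fiterS IH comp_polyA -fiterS -IH.
Qed.

Lemma horner_fiter c m x : (fiter c m).[x] = iter m (fun y => y ^+ 2 + c) x.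
Proof.
elim: m => [|m IH]; first by rewrite /fiter /= hornerX.
by rewrite fiterS fpoly_comp !hornerE IH.
Qed.

Lemma size_fpoly c : size (fpoly c) = 3%N.
Proof. by rewrite /fpoly size_XnaddC. Qed.

Lemma size_fiter c m : size (fiter c m) = (2 ^ m).+1.
Proof.
elim: m => [|m IH]; first by rewrite /fiter /= size_polyX.
have f_gt1 : (1 < size (fpoly c))%N by rewrite size_fpoly.
have ne0 : (0 < size (fiter c m.+1))%N.
  by rewrite lt0n fiterSr size_poly_eq0 comp_poly_eq0 // -size_poly_eq0 IH.
by rewrite -(prednK ne0) fiterSr size_comp_poly IH size_fpoly expnSr.
Qed.

Lemma fiter_monic c m : fiter c m \is monic.
Proof.
elim: m => [|m IH]; first exact: monicX.
rewrite fiterSr monicE lead_coef_comp ?size_fpoly // (eqP IH) mul1r.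
by rewrite /fpoly lead_coefXnaddC // expr1n.
Qed.

Lemma crit_fiter c n : crit c n.+2 = (fiter c n).[c] ^+ 2 + c.
Proof. by rewrite /crit -[n.+2.-1]/n.+1 iterSr sqrrN -iterSr iterS horner_fiter. Qed.

Lemma horner0_fiter c n : (fiter c n.+2).[0] = crit c n.+2.
Proof.
by rewrite crit_fiter !horner_fiter iterS iterSr expr0n add0r.
Qed.

Lemma size_polyC_lt_fiter (c a : F) m :
  (size a%:P < size (fiter c m))%N.
Proof.
by rewrite size_fiter (leq_ltn_trans (size_polyC_leq1 a)) // ltnS expn_gt0.
Qed.

Lemma size_fiter_subC (c a : F) m :
  size (fiter c m - a%:P) = size (fiter c m).
Proof. by rewrite size_polyDl // size_polyN size_polyC_lt_fiter. Qed.

Lemma fiter_subC_monic (c a : F) m : fiter c m - a%:P \is monic.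
Proof.
rewrite monicE lead_coefDl ?size_polyN ?size_polyC_lt_fiter //.
exact: fiter_monic.
Qed.

End Iterates.

Lemma map_fiter (F E : fieldType) (f : {rmorphism F -> E}) c m :
  map_poly f (fiter c m) = fiter (f c) m.
Proof.
elim: m => [|m IH]; first by rewrite /fiter /= map_polyX.
by rewrite !fiterS !fpoly_comp rmorphD rmorphXn /= IH map_polyC.
Qed.

(* The roots of [H] are the squares of those of [H \Po 'X^2]. *)
Lemma horner0_comp_sqr_split (E : fieldType) (H : {poly E}) (rs : seq E) :
  H != 0 -> H \Po 'X^2 %| \prod_(r <- rs) ('X - r%:P) ->
  exists s, H.[0] = lead_coef H * (-1) ^+ (size H).-1 * s ^+ 2.
Proof.
move=> H0; have [n sH] : exists n, size H = n.+1.
  by exists (size H).-1; rewrite prednK // lt0n size_poly_eq0.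
rewrite sH /=; elim: n H H0 sH => [|n IH] H H0 sH dH.
  have /size_poly1P [a _ ->] : size H == 1%N by rewrite sH.
  by exists 1; rewrite hornerC lead_coefC !expr1n !mulr1.
have [r rootHr] : exists r, root (H \Po 'X^2) r.
  have [m Em] := dvdp_prod_XsubC dH.
  case Ems: (mask m rs) Em => [|r rs'] Em.
    have := size_comp_poly H 'X^2; rewrite (eqp_size Em) big_nil size_poly1.
    by rewrite sH size_polyXn.
  by exists r; rewrite (eqp_root Em) root_prod_XsubC mem_head.
rewrite root_comp hornerXn in rootHr.
have [H' DH] := factor_theorem _ _ rootHr.
have H'0 : H' != 0 by apply: contraNneq H0 => z; rewrite DH z mul0r.
have sH' : size H' = n.+1.
  by move: sH; rewrite DH size_mul ?polyXsubC_eq0 // size_XsubC addn2; case.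
have dH' : H' \Po 'X^2 %| \prod_(r <- rs) ('X - r%:P).
  by apply: dvdp_trans dH; rewrite DH comp_polyM dvdp_mulr.
have [s Hs] := IH H' H'0 sH' dH'.
exists (s * r); rewrite DH hornerM Hs lead_coefM lead_coefXsubC hornerXsubC.
by rewrite [(-1) ^+ n.+1]exprS; ring.
Qed.

Lemma split_fiter_sqrt (E : fieldType) (c a : E) k (rs : seq E) :
  fiter c k.+2 - a%:P %= \prod_(r <- rs) ('X - r%:P) ->
  exists w z n, w ^+ 2 = a - c /\ z ^+ 2 = (-1) ^+ n * ((fiter c k).[c] - w).
Proof.
set p := fiter c k.+2 - a%:P => p_split.
have [r rootpr] : exists r, root p r.
  case: rs p_split => [|r rs] p_split; last first.
    by exists r; rewrite (eqp_root p_split) root_prod_XsubC mem_head.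
  move: (eqp_size p_split); rewrite big_nil size_poly1 /p size_fiter_subC.
  by rewrite size_fiter => -[] /eqP; rewrite expn_eq0.
set F1 := fiter c k.+1; set w := F1.[r].
have w2 : w ^+ 2 = a - c.
  move: rootpr; rewrite /root /p fiterS fpoly_comp !hornerE subr_eq0 => /eqP <-.
  by rewrite addrK.
have p_factor : p = (F1 - w%:P) * (F1 + w%:P).
  by rewrite -subr_sqr -polyC_exp w2 /p fiterS fpoly_comp polyCB; ring.
set H := (fiter c k - w%:P) \Po ('X + c%:P).
have H_X2 : H \Po 'X^2 = F1 - w%:P.
  rewrite /H -comp_polyA [('X + _) \Po _]comp_polyD comp_polyX comp_polyC -/(fpoly c).
  by rewrite comp_polyB comp_polyC -fiterSr.
have H_monic : H \is monic.
  rewrite monicE lead_coef_comp ?size_XaddC // lead_coefXaddC expr1n mulr1.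
  by rewrite -monicE fiter_subC_monic.
have H_dvd : H \Po 'X^2 %| \prod_(r <- rs) ('X - r%:P).
  by rewrite -(eqp_dvdr _ p_split) H_X2 p_factor dvdp_mulr.
have [z Hz] := horner0_comp_sqr_split (monic_neq0 H_monic) H_dvd.
exists w, z, (size H).-1; split => //.
have H0 : H.[0] = (fiter c k).[c] - w by rewrite horner_comp !hornerE.
move: Hz; rewrite H0 (eqP H_monic) mul1r => ->.
by rewrite mulrA -exprD addnn -mul2n exprM sqrrN !expr1n mul1r.
Qed.

Section QuadraticSubextension.
Variables (K : fieldType) (L : splittingFieldType K).
Local Notation G := 'Gal({:L} / 1%VS)%g.

Lemma gal_sqr_fixed (g : gal_of {:L}) (x : L) :
  g (x ^+ 2) = x ^+ 2 -> g x = x \/ g x = - x.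
Proof. by rewrite rmorphXn => /eqP; rewrite eqf_sqr => /orP[] /eqP; tauto. Qed.

Lemma is_square_sqrt_in1 (x : L) (a : K) :
  x ^+ 2 = a%:A -> x \in 1%VS -> is_square a.
Proof.
move=> x2 /vlineP [t xt]; exists t; apply: (fmorph_inj (in_alg L)).
by rewrite rmorphXn /= -xt.
Qed.

Lemma gal_opp_sqrt (x : L) :
  x ^+ 2 \in 1%VS -> x \notin 1%VS -> exists2 s, s \in G & s x = - x.
Proof.
move=> x2_in1 x_notin1.
set q := ('X - x%:P) * ('X - (- x)%:P).
have q_def : q = 'X^2 - (x ^+ 2)%:P by rewrite /q polyCN opprK polyC_exp -subr_sqr.
have size_q : size q = 3%N by rewrite q_def size_XnsubC.
have min_dvd : minPoly 1 x %| q.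
  apply: minPoly_dvdp; last by rewrite rootM root_XsubC eqxx.
  by rewrite q_def rpredB ?rpredX ?polyOverX ?polyOverC.
have size_min : size (minPoly 1 x) = 3%N.
  apply/eqP; rewrite eqn_leq -{1}size_q dvdp_leq -?size_poly_eq0 ?size_q //=.
  rewrite size_minPoly ltnS ltn_neqAle eq_sym adjoin_deg_eq1 x_notin1 -ltnS.
  rewrite -size_minPoly (root_size_gt1 _ (root_minPoly 1 x)) //.
  exact/monic_neq0/monic_minPoly.
have min_eq : minPoly 1 x %= q by rewrite -dvdp_size_eqp // size_q size_min.
have min_root : root (minPoly 1 x) (- x).
  by rewrite (eqp_root min_eq) rootM !root_XsubC eqxx orbT.
have [s sG sx] :=
  normalField_root_minPoly (sub1v _) (normalFieldf _) (memvf x) min_root.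
by exists s.
Qed.

Lemma mem1_gal_fixed_sqrt (x : L) :
  (2%:R : L) != 0 -> x ^+ 2 \in 1%VS -> (forall g, g \in G -> g x = x) -> x \in 1%VS.
Proof.
move=> two_neq0 x2_in1 x_fixed; apply: contraT => x_notin1.
have [s sG sx] := gal_opp_sqrt x2_in1 x_notin1.
have x_neq0 : x != 0 by apply: contraNneq x_notin1 => ->; apply: mem0v.
move: sx; rewrite x_fixed // => /eqP; rewrite -subr_eq0 opprK -mulr2n -mulr_natl.
by rewrite mulf_eq0 (negPf two_neq0) (negPf x_neq0).
Qed.

Hypothesis abelianG : abelian G.

Lemma gal_comm (g h : gal_of {:L}) :
  g \in G -> h \in G -> forall x, g (h x) = h (g x).
Proof.
move=> gG hG x; have /centsP/(_ g gG h hG) gh := abelianG.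
by rewrite -!galM ?memvf // gh.
Qed.

Variables (d b : K) (w z : L) (n : nat).
Hypotheses (w2 : w ^+ 2 = d%:A) (z2 : z ^+ 2 = (-1) ^+ n * (b%:A - w)).

Lemma gal_sqrt_sign (g : gal_of {:L}) : g w = w \/ g w = - w.
Proof. by apply: gal_sqr_fixed; rewrite w2 rmorph_alg. Qed.

Lemma gal_fix_norm (s g : gal_of {:L}) :
  s \in G -> g \in G -> g w = w -> g (z * s z) = z * s z.
Proof.
move=> sG gG gw; rewrite rmorphM /= (gal_comm gG sG).
have gz2 : g (z ^+ 2) = z ^+ 2.
  by rewrite z2 rmorphM rmorphXn rmorphN rmorph1 rmorphB /= rmorph_alg gw.
by case: (gal_sqr_fixed gz2) => ->; rewrite ?rmorphN ?mulrNN.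
Qed.

Lemma gal_norm_moved (s g : gal_of {:L}) :
  s \in G -> g \in G -> s w = - w -> g w = - w -> g (s (z * s z)) = z * s z.
Proof.
move=> sG gG sw gw; rewrite (gal_comm gG sG) -galM ?memvf //.
by apply: gal_fix_norm; rewrite ?groupM // galM ?memvf // gw rmorphN /= sw opprK.
Qed.

Lemma abelian_norm_square_class :
  (2%:R : K) != 0 -> ~ is_square d -> b ^+ 2 - d != 0 ->
  exists t, b ^+ 2 - d = t ^+ 2 \/ b ^+ 2 - d = t ^+ 2 * d.
Proof.
move=> two_neq0 d_nsq bd_neq0.
have two_neq0L : (2%:R : L) != 0 by rewrite -(rmorph_nat (in_alg L)) fmorph_eq0.
have alg_in1 (a : K) : a%:A \in 1%VS by apply/vlineP; exists a.
have w_notin1 : w \notin 1%VS by apply/negP => /(is_square_sqrt_in1 w2).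
have w2_in1 : w ^+ 2 \in 1%VS by rewrite w2 alg_in1.
have [s sG sw] := gal_opp_sqrt w2_in1 w_notin1.
set N := z * s z.
have N2 : N ^+ 2 = (b ^+ 2 - d)%:A.
  rewrite exprMn -rmorphXn z2 rmorphM rmorphXn rmorphN rmorph1 rmorphB /= rmorph_alg sw.
  have sign2 : (-1) ^+ n * (-1) ^+ n = 1 :> L.
    by rewrite -exprD addnn -mul2n exprM sqrrN !expr1n.
  rewrite scalerBl -w2 -[(b ^+ 2)%:A]/(in_alg L (b ^+ 2)) rmorphXn /=.
  set B := b%:A; transitivity ((-1) ^+ n * (-1) ^+ n * (B ^+ 2 - w ^+ 2)).
    by ring.
  by rewrite sign2 mul1r.
have N2_in1 : N ^+ 2 \in 1%VS by rewrite N2 alg_in1.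
have [sN|sN] : s N = N \/ s N = - N by apply: gal_sqr_fixed; rewrite N2 rmorph_alg.
  have N_in1 : N \in 1%VS.
    apply: mem1_gal_fixed_sqrt two_neq0L N2_in1 _ => g gG.
    case: (gal_sqrt_sign g) => gw; first exact: gal_fix_norm.
    by rewrite -[in LHS]sN gal_norm_moved.
  by have [t Nt] := is_square_sqrt_in1 N2 N_in1; exists t; left.
set M := N * w.
have M2 : M ^+ 2 = ((b ^+ 2 - d) * d)%:A.
  by rewrite exprMn N2 w2 -scalerAl mul1r scalerA.
have M_in1 : M \in 1%VS.
  apply: mem1_gal_fixed_sqrt two_neq0L _ _; first by rewrite M2 alg_in1.
  move=> g gG; rewrite rmorphM /=; case: (gal_sqrt_sign g) => gw; rewrite gw.
    by rewrite (gal_fix_norm sG gG gw).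
  have := gal_norm_moved sG gG sw gw; rewrite sN rmorphN /= => /eqP.
  by rewrite eqr_oppLR => /eqP ->; rewrite mulrNN.
have [u Mu] := is_square_sqrt_in1 M2 M_in1.
have d_neq0 : d != 0 by apply/eqP => d0; apply: d_nsq; exists 0; rewrite d0 expr0n.
by exists (u / d); right; rewrite expr_div_n -Mu expr2 invfM !mulrA mulfK ?mulfVK.
Qed.

End QuadraticSubextension.

Lemma abelian_layer_square_class (K : fieldType) (L : splittingFieldType K)
    (c a : K) k :
  (2%:R : K) != 0 -> ~ is_square (a - c) -> (fiter c k).[c] ^+ 2 - (a - c) != 0 ->
  splittingFieldFor 1 (map_poly (in_alg L) (fiter c k.+2 - a%:P)) {:L} ->
  abelian 'Gal({:L} / 1%VS) ->
  exists t, (fiter c k).[c] ^+ 2 - (a - c) = t ^+ 2 \/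
            (fiter c k).[c] ^+ 2 - (a - c) = t ^+ 2 * (a - c).
Proof.
move=> two_neq0 d_nsq bd_neq0 [rs p_split _] abelianG.
have map_p : map_poly (in_alg L) (fiter c k.+2 - a%:P) =
             fiter (in_alg L c) k.+2 - (in_alg L a)%:P.
  by rewrite -map_fiter -map_polyC -rmorphB.
rewrite map_p in p_split.
have [w [z [n [w2 z2]]]] := split_fiter_sqrt p_split.
apply: (abelian_norm_square_class abelianG (w := w) (z := z) (n := n)) => //.
  by rewrite w2 -rmorphB.
by rewrite z2 -map_fiter horner_map.
Qed.

Lemma irreducible_X2subC_nonsquare (K : fieldType) (d : K) :
  irreducible_poly ('X^2 - d%:P) -> ~ is_square d.
Proof.
move=> irr [y dy].
have XsubC_dvd : 'X - y%:P %| 'X^2 - d%:P.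
  by rewrite dy polyC_exp subr_sqr dvdp_mulr.
have XsubC_eqp : 'X - y%:P %= 'X^2 - d%:P by apply: apply_irredp; rewrite ?size_XsubC.
by have := eqp_size XsubC_eqp; rewrite size_XsubC size_XnsubC.
Qed.

Lemma sq_span_dim1 (K : fieldType) (v : nat -> K) :
  ~ is_square (v 0%N) -> (forall n, v n.+1 != 0) ->
  (forall n, exists t, v n.+1 = t ^+ 2 \/ v n.+1 = t ^+ 2 * v 0%N) ->
  sq_span_dim v 1.
Proof.
move=> v0_nsq vS_neq0 vS_class.
have v0_neq0 : v 0%N != 0 by apply/eqP => v0; apply: v0_nsq; exists 0; rewrite v0 expr0n.
have v_class n : v n != 0 /\ exists t, t != 0 /\ (v n = t ^+ 2 \/ v n = t ^+ 2 * v 0%N).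
  case: n => [|n].
    by split => //; exists 1; split; [exact: oner_neq0 | right; rewrite expr1n mul1r].
  split => //; have [t vt] := vS_class n; exists t; split => //.
  by apply: contraNneq (vS_neq0 n) => t0; case: vt => ->; rewrite t0 expr0n ?mul0r.
exists (fun _ => v 0%N); split.
- move=> i; split => //; exists [:: 0%N], 1; split; first exact: oner_neq0.
  by rewrite big_seq1 expr1n mul1r.
- split => // S S_neq0 [y Sy]; apply: v0_nsq; exists y; rewrite -Sy prodr_const.
  have -> : #|S| = 1%N.
    apply/eqP; rewrite eqn_leq lt0n cards_eq0 S_neq0 andbT.
    by rewrite -[X in (_ <= X)%N](card_ord 1) max_card.
  by rewrite expr1.
- move=> n; have [vn_neq0 [t [t_neq0 vt]]] := v_class n; split => //.
  case: vt => vt; first by exists set0, t; rewrite big_set0 mulr1.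
  by exists [set: 'I_1], t; rewrite prodr_const cardsT card_ord.
Qed.

Theorem theorem3p3 (K : fieldType) (c alpha : K) :
  2%N \notin [pchar K] ->
  (* 0 is not in the backward orbit: 0 \notin (f^n)^{-1}(alpha) for all n >= 1 *)
  (forall n : nat, (0 < n)%N -> (fiter c n).[0] != alpha) ->
  (* G_oo(f, alpha) abelian: every finite layer Gal(K_n / K) is abelian *)
  (forall n : nat, (0 < n)%N ->
     exists L : splittingFieldType K,
       splittingFieldFor 1%VS (map_poly (in_alg L) (fiter c n - alpha%:P)) {:L}
       /\ abelian 'Gal({:L} / 1%VS)) ->
  irreducible_poly (fpoly c - alpha%:P) ->
  sq_span_dim (fun n => calpha c alpha n.+1) 1.
Proof.
move=> pchar2 orbit0 abelian_layers irr.
have two_neq0 : (2%:R : K) != 0.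
  by apply: contra pchar2 => /eqP two0; rewrite inE /= two0 eqxx.
have d_nsq : ~ is_square (alpha - c).
  by apply: irreducible_X2subC_nonsquare; rewrite polyCB opprB addrA.
have calpha1 : calpha c alpha 1 = alpha - c by rewrite /calpha /crit /= addrC.
have calphaSS k : calpha c alpha k.+2 = (fiter c k).[c] ^+ 2 - (alpha - c).
  by rewrite /calpha crit_fiter opprB addrA.
have calphaSS_neq0 k : calpha c alpha k.+2 != 0.
  by rewrite /calpha /= subr_eq0 -horner0_fiter orbit0.
apply: sq_span_dim1 => [|//|k]; rewrite /= calpha1 //.
have [L [L_split abelianG]] := abelian_layers k.+2 isT.
rewrite calphaSS; apply: abelian_layer_square_class L_split abelianG => //.
by rewrite -calphaSS.
Qed.
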